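(* Let $k\ge 2$, $t\ge 0$, and consider a $t$-layer $k$-IGN whose activation functions belong to a collection $\Omega$. Then for every $j\in[d_t]$ there is an expression $\varphi_j\in\mathsf{TL}_k^{(tk)}(\Omega)$ with free variables among $x_1,\dots,x_k$ such that for every graph $G$ and every $\mathbf v\in V_G^k$, $[\![\varphi_j]\!]^{\mathbf v}_G=\mathbf F^{(t)}_{\mathbf v,j}$, where $\mathbf F^{(t)}$ is the tensor computed by the IGN on $G$.
   Context: Fix integers $n\ge 1$ and $\ell\ge 1$. A graph is a triple $G=(V_G,E_G,\mathrm{col}_G)$ with $V_G=[n]$, $E_G$ a set of unordered pairs of distinct vertices, and $\mathrm{col}_G:V_G\to\mathbb R^\ell$. Tensor language $\mathsf{TL}(\Omega)$: $\Omega$ is a collection of functions $f:\mathbb R^p\to\mathbb R$ ($p\ge1$ depending on $f$). Expressions: $\varphi::=\mathbf 1_{x=y}\mid \mathbf 1_{x\neq y}\mid E(x,y)\mid P_s(x)\mid \varphi\cdot\varphi\mid \varphi+\varphi\mid a\cdot\varphi\mid f(\varphi_1,\dots,\varphi_p)\mid \sum_x\varphi$ ($s\in[\ell]$, $a\in\mathbb R$, $f\in\Omega$), with the usual free variables ($\sum_x$ binds $x$). Semantics for a graph $G$ and valuation $\nu$ into $V_G$: $[\![E(x,y)]\!]^\nu_G=1$ if $\nu(x)\nu(y)\in E_G$ else $0$; $[\![P_s(x)]\!]^\nu_G=\mathrm{col}_G(\nu(x))_s$; $[\![\mathbf 1_{x\,\mathrm{op}\,y}]\!]^\nu_G=1$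 if $\nu(x)\,\mathrm{op}\,\nu(y)$ else $0$; $\cdot,+,a\cdot,f$ act on values; $[\![\sum_x\varphi]\!]^\nu_G=\sum_{v\in V_G}[\![\varphi]\!]^{\nu[x\mapsto v]}_G$. $[\![\varphi]\!]^{\mathbf v}_G$ denotes the value under $x_i\mapsto v_i$. Summation depth: $0$ for atoms, max over components for $\cdot,+,f(\dots)$, unchanged by $a\cdot$, $+1$ for $\sum_x$. $\mathsf{TL}_k^{(t)}(\Omega)$: expressions using only variables $x_1,\dots,x_k$ (re-binding allowed) of summation depth at most $t$. $k$-IGN. For $\mathbf v\in V_G^k$, $\mathsf{atp}_k(G,\mathbf v)\in\mathbb R^{d_0}$, $d_0=2\binom k2+k\ell$, lists for $1\le i<j\le k$ the indicators of $v_i=v_j$ and of $v_iv_j\in E_G$, and $\mathrm{col}_G(v_i)$ for $i\in[k]$. For $m\ge1$, $\sim_m$ is the equivalence on $[n]^m$ with $\mathbf a\sim_m\mathbf b$ iff for all $i,j\in[m]$: $a_i=a_j\Leftrightarrow b_i=b_j$; $[n]^m/{\sim_m}$ its classes. A $t$-layer $k$-IGN is given by dimensions $d_0,d_1,\dots,d_t$, real constants $c^{(r)}_{\gamma,i,j}$ ($\gamma\in[n]^{2k}/{\sim_{2k}}$, $i\in[d_{r-1}]$, $j\in[d_r]$), $b^{(r)}_{\mu,j}$ ($\mu\in[n]^k/{\sim_k}$) and activations $\sigma_r:\mathbb R\to\mathbb R$ for $r\in[t]$. On a graph $G$ it computes $\mathbf F^{(0)}\in\mathbb R^{n^k\times d_0}$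 with $\mathbf F^{(0)}_{\mathbf v,:}=\mathsf{atp}_k(G,\mathbf v)$, and for $r\in[t]$, $j\in[d_r]$, $\mathbf v\in[n]^k$: $$\mathbf F^{(r)}_{\mathbf v,j}=\sigma_r\Bigl(\sum_{\gamma\in[n]^{2k}/\sim_{2k}}\ \sum_{\mathbf w\in[n]^k}\mathbf 1_{(\mathbf v,\mathbf w)\in\gamma}\sum_{i\in[d_{r-1}]}c^{(r)}_{\gamma,i,j}\,\mathbf F^{(r-1)}_{\mathbf w,i}+\sum_{\mu\in[n]^k/\sim_k}\mathbf 1_{\mathbf v\in\mu}\,b^{(r)}_{\mu,j}\Bigr).$$ *)

From HB Require Import structures.
From mathcomp Require Import all_boot all_order all_algebra.
From mathcomp Require Import reals.
Set Implicit Arguments. Unset Strict Implicit. Unset Printing Implicit Defensive.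
Import Order.TTheory GRing.Theory Num.Theory.
Local Open Scope ring_scope.

Section Defs.
Variable R : realType.

Record graph (n l : nat) := Graph {
  gE : rel 'I_n;
  gE_sym : symmetric gE;
  gE_irr : irreflexive gE;
  gcol : 'I_n -> 'I_l -> R
}.

(* Variables are natural numbers; x_1,...,x_k are the variables 0,...,k-1.
   A function f : R^p -> R is represented as ('I_p -> R) -> R. *)
Inductive tl (l : nat) : Type :=
| TEq  : nat -> nat -> tl l
| TNeq : nat -> nat -> tl l
| TE   : nat -> nat -> tl l
| TP   : 'I_l -> nat -> tl l
| TMul : tl l -> tl l -> tl l
| TAdd : tl l -> tl l -> tl l
| TScale : R -> tl l -> tl l
| TFun : forall p : nat, (('I_p -> R) -> R) -> ('I_p -> tl l) -> tl l
| TSum : nat -> tl l -> tl l.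

Definition upd (n : nat) (nu : nat -> 'I_n) (x : nat) (w : 'I_n) : nat -> 'I_n :=
  fun y => if y == x then w else nu y.

Fixpoint tl_eval (n l : nat) (G : graph n l) (e : tl l) (nu : nat -> 'I_n) : R :=
  match e with
  | TEq x y => ((nu x == nu y) : nat)%:R
  | TNeq x y => ((nu x != nu y) : nat)%:R
  | TE x y => ((gE G (nu x) (nu y)) : nat)%:R
  | TP s x => gcol G (nu x) s
  | TMul a b => tl_eval G a nu * tl_eval G b nu
  | TAdd a b => tl_eval G a nu + tl_eval G b nu
  | TScale a b => a * tl_eval G b nu
  | TFun p f args => f (fun i => tl_eval G (args i) nu)
  | TSum x b => \sum_(w : 'I_n) tl_eval G b (upd nu x w)
  end.

Fixpoint sdepth (l : nat) (e : tl l) : nat :=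
  match e with
  | TEq _ _ | TNeq _ _ | TE _ _ | TP _ _ => 0
  | TMul a b | TAdd a b => maxn (sdepth a) (sdepth b)
  | TScale _ b => sdepth b
  | TFun p _ args => \max_(i < p) sdepth (args i)
  | TSum _ b => (sdepth b).+1
  end%N.

Fixpoint in_TL_k (l : nat) (Omega : forall p : nat, (('I_p -> R) -> R) -> Prop)
    (k : nat) (e : tl l) : Prop :=
  match e with
  | TEq x y | TNeq x y | TE x y => (x < k)%N /\ (y < k)%N
  | TP _ x => (x < k)%N
  | TMul a b | TAdd a b => in_TL_k Omega k a /\ in_TL_k Omega k b
  | TScale _ b => in_TL_k Omega k b
  | TFun p f args => (0 < p)%N /\ Omega p f /\ forall i, in_TL_k Omega k (args i)
  | TSum x b => (x < k)%N /\ in_TL_k Omega k b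
  end.

Definition TL (l : nat) (Omega : forall p : nat, (('I_p -> R) -> R) -> Prop)
    (k t : nat) (e : tl l) : Prop :=
  in_TL_k Omega k e /\ (sdepth e <= t)%N.

Notation tup n m := {ffun 'I_m -> 'I_n}.

Definition simm (n m : nat) (a b : tup n m) : bool :=
  [forall i, forall j, (a i == a j) == (b i == b j)].

Definition eq_classes (n m : nat) : {set {set tup n m}} :=
  [set [set b | simm a b] | a : tup n m].

Definition catv (n k : nat) (v w : tup n k) : tup n (k + k) :=
  [ffun i => match split i with inl a => v a | inr b => w b end].

Definition d0 (k l : nat) : nat := (2 * 'C(k, 2) + k * l)%N.

Definition atp_seq (n l k : nat) (G : graph n l) (v : tup n k) : seq R :=
  flatten [seq [:: ((v p.1 == v p.2) : nat)%:R; ((gE G (v p.1) (v p.2)) : nat)%:R]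
          | p : 'I_k * 'I_k <- [seq q : 'I_k * 'I_k <- [seq (i, j) | i <- enum 'I_k, j <- enum 'I_k] | (q.1 < q.2)%N]]
  ++ flatten [seq [seq gcol G (v i) s | s <- enum 'I_l] | i <- enum 'I_k].

Definition atp (n l k : nat) (G : graph n l) (v : tup n k) (i : 'I_(d0 k l)) : R :=
  nth 0 (atp_seq G v) i.

Definition dimf (k l : nat) (d : nat -> nat) (r : nat) : nat :=
  match r with 0 => d0 k l | _ => d r end.

Fixpoint ign_F (n l k : nat) (d : nat -> nat)
    (c : forall r : nat, {set tup n (k + k)} -> 'I_(dimf k l d r.-1) -> 'I_(dimf k l d r) -> R)
    (b : forall r : nat, {set tup n k} -> 'I_(dimf k l d r) -> R)
    (sigma : nat -> R -> R) (G : graph n l) (r : nat)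
    : tup n k -> 'I_(dimf k l d r) -> R :=
  match r return tup n k -> 'I_(dimf k l d r) -> R with
  | 0 => fun v i => atp G v i
  | r'.+1 => fun v j =>
      sigma r'.+1
        (\sum_(gam in eq_classes n (k + k)) \sum_(w : tup n k)
            ((catv v w \in gam) : nat)%:R *
            \sum_(i < dimf k l d r') c r'.+1 gam i j * @ign_F n l k d c b sigma G r' w i
         + \sum_(mu in eq_classes n k) ((v \in mu) : nat)%:R * b r'.+1 mu j)
  end.

End Defs.

Arguments ign_F {R n l k d} c b sigma G r _ _.

From HB Require Import structures.
From mathcomp Require Import all_boot all_order all_algebra.
From mathcomp Require Import reals.
From mathcomp Require Import fingroup perm.
From mathcomp Require Import ring.
From mathcomp Require Import boolp.
Set Implicit Arguments. Unset Strict Implicit. Unset Printing Implicit Defensive.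
Import Order.TTheory GRing.Theory Num.Theory.
Local Open Scope ring_scope.

(* A layer of a k-IGN applies an activation to a linear combination of sums
   Σ_w [(v, w) ∈ γ] F(w), where γ is an equality type of 2k-tuples.  Such a sum
   needs only the k variables x_1..x_k and k nested summations.  The conditions
   of γ on v alone and on w alone are quantifier-free factors.  A disequality
   v_j ≠ w_i is removed by inclusion-exclusion, [v_j ≠ w_i] = 1 - [v_j = w_i],
   and two equalities v_j = w_i = v_j' are traded for v_j = w_i and v_j = v_j'.
   Every w_i is then either free or pinned to one v_j, and the variables are
   overwritten by the w_i one at a time, choosing at each step a position that
   no remaining pin reads; when the pins form cycles, renaming two variables
   breaks one at no cost in summation depth.  So each layer adds depth k. *)

Lemma prodr_natb (R : comPzSemiRingType) (T : finType) (P : pred T) (b : pred T) :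
  \prod_(x | P x) (b x : nat)%:R = ([forall (x | P x), b x] : nat)%:R :> R.
Proof.
case: (boolP [forall (x | P x), b x]) => [/forall_inP Hb | /forall_inPn [x Px /negbTE bx]].
  by rewrite big1 // => x /Hb ->.
by rewrite (bigD1 x) //= bx mul0r.
Qed.

Lemma prodr_setU1_natb (R : comPzSemiRingType) (T : finType) (x : T) (A : {set T}) (b : pred T) :
  \prod_(y in x |: A) (b y : nat)%:R = (b x : nat)%:R * \prod_(y in A) (b y : nat)%:R :> R.
Proof.
case: (boolP (x \in A)) => xA; last by rewrite big_setU1.
by rewrite (setUidPr _) ?sub1set // (bigD1 x xA) /= mulrA -natrM mulnb andbb.
Qed.

Lemma all_flatten (T : Type) (a : pred T) (ss : seq (seq T)) :
  all a (flatten ss) = all (all a) ss.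
Proof. by elim: ss => //= s ss IH; rewrite all_cat IH. Qed.

Section Expressibility.
Variables (R : realType) (n l k : nat).
Variable Omega : forall p : nat, (('I_p -> R) -> R) -> Prop.
Hypothesis k_gt0 : (0 < k)%N.

Local Notation env := (nat -> 'I_n).
Local Notation gfun := (graph R n l -> env -> R).

Definition expressible (D : nat) (f : gfun) : Prop :=
  exists phi : tl R l, TL Omega k D phi /\ forall G nu, tl_eval G phi nu = f G nu.

Lemma expressible_ext D f g : f =2 g -> expressible D f -> expressible D g.
Proof. by move=> fg [phi [Hphi Ephi]]; exists phi; split=> // G nu; rewrite Ephi fg. Qed.

Lemma expressible_widen D D' f : (D <= D')%N -> expressible D f -> expressible D' f.
Proof.
by move=> DD' [phi [[Hphi Hd] Ephi]]; exists phi; do 2?split=> //; apply: leq_trans DD'.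
Qed.

Lemma expressible_const a : expressible 0 (fun _ _ => a).
Proof. by exists (TScale a (TEq R l 0 0)); do 2?split=> // G nu /=; rewrite eqxx mulr1. Qed.

Lemma expressible_add D f g : expressible D f -> expressible D g ->
  expressible D (fun G nu => f G nu + g G nu).
Proof.
move=> [phi [[Hphi Dphi] Ephi]] [psi [[Hpsi Dpsi] Epsi]].
by exists (TAdd phi psi); do 2?split; rewrite /= ?geq_max ?Dphi ?Dpsi // => G nu; rewrite Ephi Epsi.
Qed.

Lemma expressible_mul D f g : expressible D f -> expressible D g ->
  expressible D (fun G nu => f G nu * g G nu).
Proof.
move=> [phi [[Hphi Dphi] Ephi]] [psi [[Hpsi Dpsi] Epsi]].
by exists (TMul phi psi); do 2?split; rewrite /= ?geq_max ?Dphi ?Dpsi // => G nu; rewrite Ephi Epsi.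
Qed.

Lemma expressible_scale D a f : expressible D f -> expressible D (fun G nu => a * f G nu).
Proof. by move=> [phi [Hphi Ephi]]; exists (TScale a phi); split=> // G nu /=; rewrite Ephi. Qed.

Lemma expressible_sub D f g : expressible D f -> expressible D g ->
  expressible D (fun G nu => f G nu - g G nu).
Proof.
move=> Ef /(expressible_scale (-1)) Eg.
by apply: expressible_ext (expressible_add Ef Eg) => G nu; rewrite mulN1r.
Qed.

Lemma expressible_sum (I : Type) D (s : seq I) (P : pred I) (F : I -> gfun) :
  (forall i, P i -> expressible D (F i)) ->
  expressible D (fun G nu => \sum_(i <- s | P i) F i G nu).
Proof.
move=> EF; elim: s => [|x s IH].
  by apply: expressible_ext (expressible_widen (leq0n D) (expressible_const 0)) => G nu; rewrite big_nil.
case Px: (P x); last by apply: expressible_ext IH => G nu; rewrite big_cons Px.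
by apply: expressible_ext (expressible_add (EF x Px) IH) => G nu; rewrite big_cons Px.
Qed.

Lemma expressible_prod (I : Type) D (s : seq I) (P : pred I) (F : I -> gfun) :
  (forall i, P i -> expressible D (F i)) ->
  expressible D (fun G nu => \prod_(i <- s | P i) F i G nu).
Proof.
move=> EF; elim: s => [|x s IH].
  by apply: expressible_ext (expressible_widen (leq0n D) (expressible_const 1)) => G nu; rewrite big_nil.
case Px: (P x); last by apply: expressible_ext IH => G nu; rewrite big_cons Px.
by apply: expressible_ext (expressible_mul (EF x Px) IH) => G nu; rewrite big_cons Px.
Qed.

Lemma expressible_eq_test (i j : 'I_k) (B : bool) :
  expressible 0 (fun _ nu => ((B == (nu i == nu j)) : nat)%:R).
Proof.
case: B; first by exists (TEq R l i j); do 2?split=> //= G nu; rewrite eqxx.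
by exists (TNeq R l i j); do 2?split=> //= G nu; case: (nu i == nu j).
Qed.

Lemma expressible_activation D f (s : R -> R) :
  @Omega 1%N (fun x : 'I_1 -> R => s (x ord0)) -> expressible D f ->
  expressible D (fun G nu => s (f G nu)).
Proof.
move=> Os [phi [[Hphi Dphi] Ephi]].
exists (TFun (fun x : 'I_1 -> R => s (x ord0)) (fun _ => phi)).
by do 2?split; rewrite /= ?big_ord1 // => G nu; rewrite Ephi.
Qed.

(* [Some j] pins a value to x_j, [None] leaves it free. *)
Definition pinned_at (o : option 'I_k) (nu : env) (y : 'I_n) : bool :=
  if o is Some j then y == nu j else true.

Lemma expressible_pinned_var D g (r : 'I_k) (o : option 'I_k) : o != Some r ->
  expressible D g ->
  expressible D.+1 (fun G nu => \sum_(y : 'I_n) (pinned_at o nu y : nat)%:R * g G (upd nu r y)).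
Proof.
move=> or [phi [[Hphi Dphi] Ephi]]; case: o or => [j|] or.
  exists (TSum r (TMul (TEq R l r j) phi)); do 2?split; rewrite /= ?max0n //.
  have jr : (j : nat) == r = false by apply: contraNF or => /eqP /val_inj ->.
  by move=> G nu; apply: eq_bigr => y _; rewrite Ephi /upd eqxx jr.
by exists (TSum r phi); do 2?split => // G nu /=; apply: eq_bigr => y _; rewrite Ephi mul1r.
Qed.

Fixpoint rename (rho : nat -> nat) (e : tl R l) : tl R l :=
  match e with
  | TEq x y => TEq R l (rho x) (rho y)
  | TNeq x y => TNeq R l (rho x) (rho y)
  | TE x y => TE R l (rho x) (rho y)
  | TP s x => @TP R l s (rho x)
  | TMul a b => TMul (rename rho a) (rename rho b)
  | TAdd a b => TAdd (rename rho a) (rename rho b)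
  | TScale c b => TScale c (rename rho b)
  | TFun p f args => TFun f (fun i => rename rho (args i))
  | TSum x b => TSum (rho x) (rename rho b)
  end.

Lemma tl_eval_rename rho (e : tl R l) (G : graph R n l) (nu : env) : injective rho ->
  tl_eval G (rename rho e) nu = tl_eval G e (nu \o rho).
Proof.
move=> rho_inj; elim: e nu => //= [a IHa b IHb | a IHa b IHb | c b IHb | p f args IH | x b IHb] nu.
- by rewrite IHa IHb.
- by rewrite IHa IHb.
- by rewrite IHb.
- by congr f; apply: funext => i; rewrite IH.
apply: eq_bigr => w _; rewrite IHb; congr tl_eval.
by apply: funext => y; rewrite /upd /= (inj_eq rho_inj).
Qed.

Lemma in_TL_k_rename rho (e : tl R l) : (forall x, (x < k)%N -> (rho x < k)%N) ->
  in_TL_k Omega k e -> in_TL_k Omega k (rename rho e).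
Proof.
move=> rho_k; elim: e => /=.
- by move=> x y [/rho_k ? /rho_k ?].
- by move=> x y [/rho_k ? /rho_k ?].
- by move=> x y [/rho_k ? /rho_k ?].
- by move=> s x /rho_k.
- by move=> a IHa b IHb [/IHa ? /IHb ?].
- by move=> a IHa b IHb [/IHa ? /IHb ?].
- by move=> c b IHb /IHb.
- by move=> p f args IH [p_gt0 [Of Hargs]]; split=> //; split=> // i; apply: IH.
by move=> x b IHb [/rho_k ? /IHb ?].
Qed.

Lemma sdepth_rename rho (e : tl R l) : sdepth (rename rho e) = sdepth e.
Proof.
elim: e => //= [a -> b -> // | a -> b -> // | p f args IH | x b -> //].
by apply: eq_bigr => i _; rewrite IH.
Qed.

Definition perm_var (s : {perm 'I_k}) (x : nat) : nat :=
  if insub x is Some i then val (s i) else x.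

Lemma perm_varK s : cancel (perm_var s) (perm_var s^-1%g).
Proof.
move=> x; case: (ltnP x k) => [x_lt | x_ge].
  by rewrite -[x]/(nat_of_ord (Ordinal x_lt)) /perm_var !valK permK.
by rewrite /perm_var !insubN // -leqNgt.
Qed.

Lemma perm_var_lt s x : (x < k)%N -> (perm_var s x < k)%N.
Proof. by move=> x_lt; rewrite -[x]/(nat_of_ord (Ordinal x_lt)) /perm_var valK ltn_ord. Qed.

Lemma expressible_perm s D f : expressible D f ->
  expressible D (fun G nu => f G (nu \o perm_var s)).
Proof.
move=> [phi [[Hphi Dphi] Ephi]]; exists (rename (perm_var s) phi).
split; first by split; [apply: in_TL_k_rename => // x; apply: perm_var_lt | rewrite sdepth_rename].
by move=> G nu; rewrite tl_eval_rename ?Ephi //; apply: can_inj (perm_varK s).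
Qed.

Local Notation tup := {ffun 'I_k -> 'I_n}.

Definition tuple_of_env (nu : env) : tup := [ffun i : 'I_k => nu i].

Definition env_with (nu : env) (w : tup) : env :=
  fun x => if insub x is Some i then w i else nu x.

Lemma env_with_ord nu w (i : 'I_k) : env_with nu w i = w i.
Proof. by rewrite /env_with valK. Qed.

Lemma tuple_of_env_with nu w : tuple_of_env (env_with nu w) = w.
Proof. by apply/ffunP => i; rewrite ffunE env_with_ord. Qed.

Lemma env_with_tuple_of_env nu : env_with nu (tuple_of_env nu) = nu.
Proof.
by apply: funext => x; rewrite /env_with; case: insubP => // i _ <-; rewrite ffunE.
Qed.

Lemma env_with_upd nu w (r : 'I_k) y : env_with (upd nu r y) w = env_with nu w.
Proof.
apply: funext => x; rewrite /env_with /upd.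
case: insubP => // /negbTE x_ge; case: eqP => // xr.
by move: (ltn_ord r); rewrite -xr x_ge.
Qed.

Lemma env_with_perm nu (w : tup) (s : {perm 'I_k}) :
  env_with nu [ffun i => w (s i)] = env_with nu w \o perm_var s.
Proof.
apply: funext => x; rewrite /= /perm_var /env_with.
by case: insubP => [i _ _ | /negbTE x_ge]; rewrite ?ffunE ?valK // insubF.
Qed.

Lemma pinned_at_upd o nu (r : 'I_k) y z : o != Some r ->
  pinned_at o (upd nu r y) z = pinned_at o nu z.
Proof.
case: o => [j|] //= jr; have jr' : (j : nat) == r = false by apply: contraNF jr => /eqP /val_inj ->.
by rewrite /upd jr'.
Qed.

Definition pinned (a : 'I_k -> option 'I_k) (nu : env) (w : tup) : bool :=
  [forall i, pinned_at (a i) nu (w i)].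

Definition pinned_sum (a : 'I_k -> option 'I_k) (f : gfun) : gfun :=
  fun G nu => \sum_(w : tup) (pinned a nu w : nat)%:R * f G (env_with nu w).

Definition unsettled (a : 'I_k -> option 'I_k) : {set 'I_k} := [set i | a i != Some i].

Definition settle (a : 'I_k -> option 'I_k) (r : 'I_k) : 'I_k -> option 'I_k :=
  fun i => if i == r then Some r else a i.

Lemma pinned_sum_settled a f G nu : unsettled a = set0 -> pinned_sum a f G nu = f G nu.
Proof.
move=> a0; have a_id i : a i = Some i.
  by apply/eqP; move/setP/(_ i): a0; rewrite !inE => /negbFE.
have pinned_eq w : pinned a nu w = (w == tuple_of_env nu).
  apply/forallP/eqP => [pin | -> i]; last by rewrite a_id ffunE /=.
  by apply/ffunP => i; move: (pin i); rewrite a_id ffunE => /eqP.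
rewrite /pinned_sum (bigD1 (tuple_of_env nu)) //= pinned_eq eqxx mul1r env_with_tuple_of_env.
by rewrite big1 ?addr0 // => w /negbTE w_nu; rewrite pinned_eq w_nu mul0r.
Qed.

Lemma pinned_sum_settle a f (r : 'I_k) G nu : (forall i, i != r -> a i != Some r) ->
  pinned_sum a f G nu =
  \sum_(y : 'I_n) (pinned_at (a r) nu y : nat)%:R * pinned_sum (settle a r) f G (upd nu r y).
Proof.
move=> unread; rewrite /pinned_sum; under [RHS]eq_bigr do rewrite mulr_sumr.
rewrite exchange_big; apply: eq_bigr => w _ /=.
pose others := [forall (i | i != r), pinned_at (a i) nu (w i)].
have pinned_r : pinned a nu w = pinned_at (a r) nu (w r) && others.
  apply/forallP/andP => [pin | [pin_r /forall_inP pin_i] i].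
    by split; [exact: pin | apply/forall_inP => i _; exact: pin].
  by case: (eqVneq i r) => [-> | /pin_i].
have pinned_settle y : pinned (settle a r) (upd nu r y) w = (y == w r) && others.
  apply/forallP/andP => [pin | [/eqP -> /forall_inP pin_i] i].
    split; first by move: (pin r); rewrite /settle eqxx /= /upd eqxx eq_sym.
    apply/forall_inP => i ir; move: (pin i).
    by rewrite /settle (negbTE ir) pinned_at_upd ?unread.
  rewrite /settle; case: (eqVneq i r) => [-> | ir]; first by rewrite /= /upd eqxx.
  by rewrite pinned_at_upd ?unread ?pin_i.
rewrite (bigD1 (w r)) //= big1 ?addr0 => [|y /negbTE yr]; last first.
  by rewrite pinned_settle yr mul0r mulr0.
by rewrite env_with_upd pinned_settle eqxx mulrA -natrM mulnb pinned_r.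
Qed.

Lemma pinned_sum_perm a f (s : {perm 'I_k}) G nu :
  pinned_sum a f G nu = pinned_sum (a \o s) (fun G nu => f G (nu \o perm_var s^-1%g)) G nu.
Proof.
symmetry; rewrite /pinned_sum (reindex_inj (h := fun w : tup => [ffun i => w (s i)])) /=; last first.
  by move=> w w' /ffunP ww'; apply/ffunP => i; move: (ww' (s^-1%g i)); rewrite !ffunE permKV.
apply: eq_bigr => w _; congr ((nat_of_bool _)%:R * f G _).
  apply/forallP/forallP => pin i; last by rewrite ffunE; exact: pin.
  by move: (pin (s^-1%g i)); rewrite /= ffunE permKV.
apply: funext => x; rewrite env_with_perm /=.
by rewrite -{2}(perm_varK s^-1%g x) invgK.
Qed.

Lemma card_unsettled_settle a r : r \in unsettled a ->
  #|unsettled a| = #|unsettled (settle a r)|.+1.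
Proof.
move=> ra; rewrite (cardsD1 r) ra add1n; congr _.+1; apply: eq_card => i.
by rewrite !inE /settle; case: (eqVneq i r) => [-> | ir]; rewrite ?eqxx.
Qed.

Lemma card_unsettled_perm a (i r : 'I_k) : i != r -> a i = Some r -> r \in unsettled a ->
  (#|unsettled (a \o tperm i r)| < #|unsettled a|)%N.
Proof.
move=> ir air ra; apply/proper_card/properP; split.
  apply/subsetP => x; rewrite !inE /=.
  case: tpermP => [-> | -> | _ _] //; last by rewrite air eqxx.
  by move=> _; rewrite air (inj_eq Some_inj) eq_sym.
by exists r => //; rewrite !inE /= tpermR air eqxx.
Qed.

(* An unsettled position r that no other pin reads costs one summation over x_r;
   if some i <> r reads it, swapping the positions i and r settles r for free. *)
Lemma expressible_pinned_sum a D f : expressible D f ->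
  expressible (D + #|unsettled a|) (pinned_sum a f).
Proof.
have [m] := ubnP #|unsettled a|; elim: m a f => // m IH a f; rewrite ltnS => a_m Ef.
case: (set_0Vmem (unsettled a)) => [a0 | [r ra]].
  by rewrite a0 cards0 addn0; apply: expressible_ext Ef => G nu; rewrite pinned_sum_settled.
case: (pickP (fun i => (i != r) && (a i == Some r))) => [i /andP [ir /eqP air] | unread].
  have Es := expressible_perm (tperm i r)^-1%g Ef.
  have lt_a := card_unsettled_perm ir air ra.
  apply: expressible_ext (fun G nu => esym (pinned_sum_perm a f (tperm i r) G nu)) _.
  by apply: (expressible_widen _ (IH _ _ (leq_trans lt_a a_m) Es)); rewrite leq_add2l ltnW.
have unread' i : i != r -> a i != Some r.
  by move=> ir; apply/negP => /eqP air; move: (unread i); rewrite /= ir air eqxx.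
have ra' : a r != Some r by move: ra; rewrite inE.
rewrite (card_unsettled_settle ra) in a_m *; rewrite addnS.
apply: expressible_ext (expressible_pinned_var ra' (IH _ _ a_m Ef)) => G nu.
by rewrite (@pinned_sum_settle a f r G nu unread').
Qed.

Definition pattern_sum (P N : {set 'I_k * 'I_k}) (f : gfun) : gfun :=
  fun G nu => \sum_(w : tup)
    (\prod_(p in P) (nu p.1 == w p.2 : nat)%:R) * (\prod_(p in N) (nu p.1 != w p.2 : nat)%:R) *
    f G (env_with nu w).

Lemma pattern_sum_split (P N : {set 'I_k * 'I_k}) p f G nu : p \in N ->
  pattern_sum P N f G nu = pattern_sum P (N :\ p) f G nu - pattern_sum (p |: P) (N :\ p) f G nu.
Proof.
move=> pN; rewrite /pattern_sum -sumrB; apply: eq_bigr => w _.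
by rewrite (big_setD1 p pN) prodr_setU1_natb /=; case: (_ == _) => /=; ring.
Qed.

(* The equalities v_j = w_i of P with the same i are replaced by w_i = v_(anchor i)
   together with the quantifier-free v_j = v_(anchor i). *)
Definition anchor (P : {set 'I_k * 'I_k}) (i : 'I_k) : option 'I_k := [pick j | (j, i) \in P].

Lemma pattern_sum_pinned (P : {set 'I_k * 'I_k}) f G nu :
  pattern_sum P set0 f G nu =
  (\prod_(p in P) (pinned_at (anchor P p.2) nu (nu p.1) : nat)%:R) * pinned_sum (anchor P) f G nu.
Proof.
rewrite /pattern_sum /pinned_sum mulr_sumr; apply: eq_bigr => w _.
rewrite big_set0 mulr1 mulrA !prodr_natb -natrM mulnb; congr ((nat_of_bool _)%:R * _).
apply/forall_inP/andP => [eqs | [/forall_inP anch /forallP pin] [j i] pP].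
  split; last first.
    by apply/forallP => i; rewrite /pinned_at /anchor; case: pickP => // j0 /eqs; rewrite eq_sym.
  apply/forall_inP => -[j i] /eqs /= /eqP ->; rewrite /anchor.
  by case: pickP => // j0 /eqs /= /eqP ->.
move: (anch _ pP) (pin i); rewrite /pinned_at /anchor /=.
by case: pickP => [j0 _ /eqP -> /eqP -> | /(_ j)]; rewrite ?pP.
Qed.

Lemma expressible_pinned_at o (x : 'I_k) :
  expressible 0 (fun _ nu => (pinned_at o nu (nu x) : nat)%:R).
Proof.
case: o => [j|]; first exact: expressible_eq_test x j true.
exact: expressible_const.
Qed.

Lemma expressible_pattern_sum (P N : {set 'I_k * 'I_k}) D f : expressible D f ->
  expressible (D + k) (pattern_sum P N f).
Proof.
move=> Ef; have [m] := ubnP #|N|; elim: m P N => // m IH P N; rewrite ltnS => N_m.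
case: (set_0Vmem N) => [-> | [p pN]].
  have Eanchors : expressible 0 (fun _ nu =>
      \prod_(p in P) (pinned_at (anchor P p.2) nu (nu p.1) : nat)%:R).
    by apply: expressible_prod => p _; apply: expressible_pinned_at.
  have Epinned := expressible_pinned_sum (anchor P) Ef.
  have unsettled_k : (D + #|unsettled (anchor P)| <= D + k)%N.
    by rewrite leq_add2l (leq_trans (max_card _)) ?card_ord.
  apply: expressible_ext (expressible_mul (expressible_widen (leq0n _) Eanchors)
                                          (expressible_widen unsettled_k Epinned)) => G nu.
  by rewrite pattern_sum_pinned.
rewrite (cardsD1 p) pN add1n in N_m.
apply: expressible_ext (expressible_sub (IH P _ N_m) (IH (p |: P) _ N_m)) => G nu.
by rewrite (pattern_sum_split P f G nu pN).
Qed.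

Definition same_eq_type (u : 'I_k -> 'I_n) (nu : env) : bool :=
  [forall i, forall j, (u i == u j) == (nu i == nu j)].

Lemma expressible_same_eq_type u : expressible 0 (fun _ nu => (same_eq_type u nu : nat)%:R).
Proof.
apply: (expressible_ext (f := fun _ nu =>
  \prod_i \prod_j (((u i == u j) == (nu i == nu j)) : nat)%:R)).
  by move=> G nu; under eq_bigr do rewrite prodr_natb; rewrite prodr_natb.
by do 2!(apply: expressible_prod => ? _); apply: expressible_eq_test.
Qed.

Lemma catvL (v w : tup) i : catv v w (lshift k i) = v i.
Proof. by rewrite ffunE -[lshift k i]/(@unsplit k k (inl i)) unsplitK. Qed.

Lemma catvR (v w : tup) i : catv v w (rshift k i) = w i.
Proof. by rewrite ffunE -[rshift k i]/(@unsplit k k (inr i)) unsplitK. Qed.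

Definition cross_eq_type (a : {ffun 'I_(k + k) -> 'I_n}) (nu : env) (w : tup) : bool :=
  [forall p : 'I_k * 'I_k, (a (lshift k p.1) == a (rshift k p.2)) == (nu p.1 == w p.2)].

Lemma simm_catv (a : {ffun 'I_(k + k) -> 'I_n}) (nu : env) (w : tup) :
  simm a (catv (tuple_of_env nu) w) =
  [&& same_eq_type (fun i => a (lshift k i)) nu, cross_eq_type a nu w
    & same_eq_type (fun i => a (rshift k i)) (env_with nu w)].
Proof.
apply/forallP/and3P => [eqt | [/forallP eqL /forallP eqX /forallP eqR] p].
  split; [apply/forallP => i; apply/forallP => j | apply/forallP => -[i j] /= |
          apply/forallP => i; apply/forallP => j].
  - by move/forallP: (eqt (lshift k i)) => /(_ (lshift k j)); rewrite !catvL !ffunE.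
  - by move/forallP: (eqt (lshift k i)) => /(_ (rshift k j)); rewrite catvL catvR ffunE.
  - by move/forallP: (eqt (rshift k i)) => /(_ (rshift k j)); rewrite !catvR !env_with_ord.
apply/forallP => q; rewrite -(splitK p) -(splitK q).
case: (split p) => [i|i]; case: (split q) => [j|j] /=; rewrite ?catvL ?catvR ?ffunE.
- by move/forallP: (eqL i) => /(_ j).
- exact: (eqX (i, j)).
- by move: (eqX (j, i)); rewrite /= [a (rshift _ _) == _]eq_sym [w i == _]eq_sym.
- by move/forallP: (eqR i) => /(_ j); rewrite !env_with_ord.
Qed.

Definition cross_eqs (a : {ffun 'I_(k + k) -> 'I_n}) : {set 'I_k * 'I_k} :=
  [set p | a (lshift k p.1) == a (rshift k p.2)].

Lemma cross_eq_type_pattern (a : {ffun 'I_(k + k) -> 'I_n}) (nu : env) (w : tup) :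
  (\prod_(p in cross_eqs a) (nu p.1 == w p.2 : nat)%:R) *
  (\prod_(p in ~: cross_eqs a) (nu p.1 != w p.2 : nat)%:R) = (cross_eq_type a nu w : nat)%:R :> R.
Proof.
rewrite !prodr_natb -natrM mulnb; congr (nat_of_bool _)%:R.
apply/andP/forallP => [[/forall_inP eqs /forall_inP neqs] p | eqt].
  move: (eqs p) (neqs p); rewrite !inE.
  by case: (a _ == a _) => [/(_ isT) -> _ | _ /(_ isT) /negbTE ->].
by split; apply/forall_inP => p; rewrite !inE => pa; move: (eqt p); rewrite ?(negbTE pa) ?pa.
Qed.

Lemma expressible_class_sum (a : {ffun 'I_(k + k) -> 'I_n}) D f : expressible D f ->
  expressible (D + k) (fun G nu => \sum_(w : tup)
    ((catv (tuple_of_env nu) w \in [set b | simm a b]) : nat)%:R * f G (env_with nu w)).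
Proof.
move=> Ef.
have ER := expressible_mul (expressible_widen (leq0n D) (expressible_same_eq_type
  (fun i => a (rshift k i)))) Ef.
have EL := expressible_widen (leq0n (D + k)) (expressible_same_eq_type (fun i => a (lshift k i))).
apply: expressible_ext (expressible_mul EL (expressible_pattern_sum (cross_eqs a) (~: cross_eqs a) ER)).
move=> G nu; rewrite /pattern_sum mulr_sumr; apply: eq_bigr => w _.
by rewrite inE simm_catv mulrA cross_eq_type_pattern !mulrA -!natrM !mulnb andbA.
Qed.

Lemma simm_tuple_of_env a nu : simm a (tuple_of_env nu) = same_eq_type a nu.
Proof. by apply: eq_forallb => i; apply: eq_forallb => j; rewrite !ffunE. Qed.

Definition atom_k (e : tl R l) : bool :=
  match e with
  | TEq x y | TE x y => (x < k)%N && (y < k)%N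
  | TP _ x => (x < k)%N
  | _ => false
  end.

Lemma TL_atom e : atom_k e -> TL Omega k 0 e.
Proof. by case: e => //= [x y | x y] /andP [xk yk]. Qed.

Definition atp_tl : seq (tl R l) :=
  flatten [seq [:: TEq R l p.1 p.2; TE R l p.1 p.2] | p : 'I_k * 'I_k <-
     [seq q : 'I_k * 'I_k <- [seq (i, j) | i <- enum 'I_k, j <- enum 'I_k] | (q.1 < q.2)%N]]
  ++ flatten [seq [seq @TP R l s i | s : 'I_l <- enum 'I_l] | i : 'I_k <- enum 'I_k].

Lemma atp_tl_eval G nu : [seq tl_eval G e nu | e <- atp_tl] = atp_seq G (tuple_of_env nu).
Proof.
rewrite /atp_seq map_cat !map_flatten -!map_comp; congr (flatten _ ++ flatten _).
  by apply: eq_map => p /=; rewrite !ffunE.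
by apply: eq_map => i /=; rewrite -map_comp; apply: eq_map => s /=; rewrite ffunE.
Qed.

Lemma all_atom_atp_tl : all atom_k atp_tl.
Proof.
rewrite all_cat !all_flatten !all_map; apply/andP; split; apply/allP => x _ /=.
  by rewrite !ltn_ord.
by rewrite all_map; apply/allP => s _ /=; rewrite ltn_ord.
Qed.

Lemma expressible_atp (i : 'I_(d0 k l)) : expressible 0 (fun G nu => atp G (tuple_of_env nu) i).
Proof.
case: (ltnP i (size atp_tl)) => [i_lt | i_ge].
  exists (nth (TEq R l 0 0) atp_tl i); split.
    by apply: TL_atom; move/(all_nthP (TEq R l 0 0)): all_atom_atp_tl; apply.
  by move=> G nu; rewrite /atp -atp_tl_eval (nth_map (TEq R l 0 0)).
apply: expressible_ext (expressible_const 0) => G nu.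
by rewrite /atp -atp_tl_eval nth_default // size_map.
Qed.

Section InvariantGraphNetworks.
Variable d : nat -> nat.
Variable c : forall r : nat,
  {set {ffun 'I_(k + k) -> 'I_n}} -> 'I_(dimf k l d r.-1) -> 'I_(dimf k l d r) -> R.
Variable b : forall r : nat, {set {ffun 'I_k -> 'I_n}} -> 'I_(dimf k l d r) -> R.
Variable sigma : nat -> R -> R.

Lemma expressible_ign_layer r D :
  @Omega 1%N (fun x : 'I_1 -> R => sigma r.+1 (x ord0)) ->
  (forall i, expressible D (fun G nu => ign_F c b sigma G r (tuple_of_env nu) i)) ->
  forall j, expressible (D + k) (fun G nu => ign_F c b sigma G r.+1 (tuple_of_env nu) j).
Proof.
move=> Osig EF j.
have Emessages : expressible (D + k) (fun G nu =>
    \sum_(gam in eq_classes n (k + k)) \sum_(i < dimf k l d r) \sum_(w : tup)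
      ((catv (tuple_of_env nu) w \in gam) : nat)%:R *
      (@c r.+1 gam i j * ign_F c b sigma G r (tuple_of_env (env_with nu w)) i)).
  apply: expressible_sum => _ /imsetP [a _ ->]; apply: expressible_sum => i _.
  exact: expressible_class_sum (expressible_scale _ (EF i)).
have Ebias : expressible (D + k) (fun G nu =>
    \sum_(mu in eq_classes n k) @b r.+1 mu j * ((tuple_of_env nu \in mu) : nat)%:R).
  apply: expressible_widen (leq0n _) _; apply: expressible_sum => _ /imsetP [a _ ->].
  apply: expressible_scale; apply: expressible_ext (expressible_same_eq_type a) => G nu.
  by rewrite inE simm_tuple_of_env.
apply: expressible_ext (expressible_activation Osig (expressible_add Emessages Ebias)) => G nu /=.
congr (sigma _ (_ + _)).
  apply: eq_bigr => gam _; rewrite exchange_big /=; apply: eq_bigr => w _.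
  by rewrite mulr_sumr tuple_of_env_with.
by apply: eq_bigr => mu _; rewrite mulrC.
Qed.

End InvariantGraphNetworks.
End Expressibility.

Unset Implicit Arguments.
Set Strict Implicit.

Theorem mainTheorem8 (R : realType) (n l k t : nat)
    (Omega : forall p : nat, (('I_p -> R) -> R) -> Prop)
    (d : nat -> nat)
    (c : forall r : nat,
        {set {ffun 'I_(k + k) -> 'I_n}} -> 'I_(dimf k l d r.-1) -> 'I_(dimf k l d r) -> R)
    (b : forall r : nat, {set {ffun 'I_k -> 'I_n}} -> 'I_(dimf k l d r) -> R)
    (sigma : nat -> R -> R) :
  (0 < n)%N -> (2 <= k)%N ->
  (forall r : nat, (1 <= r <= t)%N -> Omega 1%N (fun x : 'I_1 -> R => sigma r (x ord0))) ->
  forall j : 'I_(dimf k l d t),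
  exists phi : tl R l,
    TL Omega k (t * k) phi /\
    forall (G : graph R n l) (v : {ffun 'I_k -> 'I_n}) (nu : nat -> 'I_n),
      (forall i : 'I_k, nu i = v i) ->
      tl_eval G phi nu = ign_F c b sigma G t v j.
Proof.
move=> _ k_ge2 Osig j.
have k_gt0 : (0 < k)%N := ltnW k_ge2.
suff EF r : (r <= t)%N -> forall j : 'I_(dimf k l d r),
    expressible k Omega (r * k) (fun G nu => ign_F c b sigma G r (tuple_of_env k nu) j).
  have [phi [TLphi Ephi]] := EF t (leqnn t) j.
  exists phi; split=> // G v nu nu_v; rewrite Ephi; congr ign_F.
  by apply/ffunP => i; rewrite ffunE nu_v.
elim: r => [_ | r IH r_t] j'; first exact: expressible_atp.
by rewrite mulSn addnC; apply: expressible_ign_layer (Osig r.+1 r_t) (IH (ltnW r_t)) j'.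
Qed.
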